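(* Let $p>1$, $\kappa\in\mathbb{R}$, $h>0$ and $\sigma<1$. Suppose $\eta:\mathbb{R}\to\mathbb{C}$ is a nontrivial finite energy solution (i.e. $\eta\in L^\infty(\mathbb{R})\cap\dot H^1(\mathbb{R})$) of $$(\kappa+ih\sigma)\eta-ih\Lambda_z\eta-\eta_{zz}-\delta|\eta|^{p-1}\eta=0,\qquad \Lambda_z=\tfrac12+z\partial_z.$$ Then $\sigma>0$ and $$0=(1-\sigma)\int_{-\infty}^{+\infty}|\eta_z|^2\,dz-\Big(\frac12-\sigma\Big)|\eta(0)|^{p+1}.$$ Consequently, if $\sigma=\sigma_c:=\frac12-\frac1{p-1}$, then $E(\eta)=0$, where $E(\eta)=\frac12\int_{-\infty}^{+\infty}|\eta_z|^2\,dz-\frac1{p+1}|\eta(0)|^{p+1}$.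
   Context: $\delta$ is the Dirac delta at the origin. The equation means: $(\kappa+ih\sigma)\eta-ih(\frac12\eta+z\eta_z)-\eta_{zz}=0$ for $z\neq0$, $\eta$ is continuous at $z=0$ (i.e. $\eta(0-)=\eta(0+)=:\eta(0)$), and $\eta_z(0+)-\eta_z(0-)=-|\eta(0)|^{p-1}\eta(0)$, where $f(0\pm)$ denote one-sided limits. *)

From Stdlib Require Import Reals.
From Coquelicot Require Import Coquelicot.
Open Scope R_scope.

(* Real power x^a for x >= 0 with the convention 0^a = 0 (used with a > 0).
   (Stdlib's Rpower 0 a = 1, which is why we do not use it directly.) *)
Definition rpow (x a : R) : R := if Rle_dec x 0 then 0 else Rpower x a.

Definition dirichlet (eta' : R -> C) : R :=
  RInt_gen (fun z => (Cmod (eta' z)) ^ 2) (Rbar_locally m_infty) (Rbar_locally p_infty).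

Definition energy (p : R) (eta eta' : R -> C) : R :=
  / 2 * dirichlet eta' - / (p + 1) * rpow (Cmod (eta 0)) (p + 1).

From Stdlib Require Import Reals Lra Psatz Classical IndefiniteDescription.
From Coquelicot Require Import Coquelicot.
Open Scope R_scope.

(* Write eta = u + i v, mass = |eta|^2, dens = |eta_z|^2 and current = Im (conj eta * eta_z).
   Away from 0 the equation gives two exact derivatives:
     F = z/2 dens + (1/2 - sigma) Re (conj eta * eta_z) + kappa/h current,   F' = (1 - sigma) dens,
     G = current + h/2 z mass,                                               G' = h sigma mass.
   The delta condition makes F jump by -(1/2 - sigma) r |eta(0)|^2 at 0, with r = |eta(0)|^(p-1).
   As dens is integrable, there are radii R -> oo with R (dens R + dens (-R)) -> 0; along them
   F(R) - F(-R) -> 0, and integrating F' over [-R, R] gives the identity.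
   The jump of eta_z is a real multiple of eta(0), so G is continuous at 0. If sigma <= 0, G is
   nonincreasing on both half-lines with tail values tending to 0, hence G = 0. On a half-line,
   G = 0 gives dens >= (h z/2)^2 mass; the nondecreasing quantity dens - kappa mass must then stay
   <= 0. So mass vanishes wherever (h z/2)^2 > kappa, and Gronwall's inequality
   mass' >= -2 sqrt(kappa) mass propagates this back to the whole half-line. *)

(* auto_derive leaves [Derive (fun t : R => f t) x]; the binder type must match to rewrite. *)
Ltac derive_by_hyps :=
  auto_derive;
  [ repeat first [ exact I | solve [ eexists; eassumption ] | split ]
  | repeat match goal with
           | H : is_derive ?f ?x ?l |- _ =>
               rewrite (is_derive_unique (fun t : R => f t) x l H); clear H
           end ].

Lemma filterlim_locally_eq {T} {F : (T -> Prop) -> Prop} (f : T -> R) a b :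
  filterlim f F (locally a) -> a = b :> R -> filterlim f F (locally b).
Proof. intros hf <-. exact hf. Qed.

Lemma filterlim_Rplus {T} {F : (T -> Prop) -> Prop} {FF : Filter F} (f g : T -> R) a b :
  filterlim f F (locally a) -> filterlim g F (locally b) ->
  filterlim (fun x => f x + g x) F (locally (a + b)).
Proof.
  intros hf hg. eapply filterlim_comp_2; [exact hf | exact hg |]. apply (filterlim_plus a b).
Qed.

Lemma filterlim_Rmult {T} {F : (T -> Prop) -> Prop} {FF : Filter F} (f g : T -> R) a b :
  filterlim f F (locally a) -> filterlim g F (locally b) ->
  filterlim (fun x => f x * g x) F (locally (a * b)).
Proof.
  intros hf hg. eapply filterlim_comp_2; [exact hf | exact hg |]. apply (filterlim_mult a b).
Qed.

Lemma filterlim_Rminus {T} {F : (T -> Prop) -> Prop} {FF : Filter F} (f g : T -> R) a b :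
  filterlim f F (locally a) -> filterlim g F (locally b) ->
  filterlim (fun x => f x - g x) F (locally (a - b)).
Proof.
  intros hf hg. replace (a - b) with (a + (-1) * b) by ring.
  apply (filterlim_ext (fun x => f x + (-1) * g x)); [intros x; ring |].
  apply filterlim_Rplus; [exact hf | apply filterlim_Rmult; [apply filterlim_const | exact hg]].
Qed.

Lemma filterlim_Rpow {T} {F : (T -> Prop) -> Prop} {FF : Filter F} (f : T -> R) a n :
  filterlim f F (locally a) -> filterlim (fun x => f x ^ n) F (locally (a ^ n)).
Proof.
  intros hf. induction n as [| n IH]; [apply filterlim_const |].
  apply filterlim_Rmult; [exact hf | exact IH].
Qed.

Ltac lim_by_hyps :=
  repeat first
    [ apply filterlim_Rminus | apply filterlim_Rplus | apply filterlim_Rmult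
    | apply filterlim_Rpow | apply filterlim_const | eassumption ].

Lemma filterlim_Re {T} {F : (T -> Prop) -> Prop} {FF : Filter F} (f : T -> C) l :
  filterlim f F (locally l) -> filterlim (fun x => Re (f x)) F (locally (Re l)).
Proof. intros hf. eapply filterlim_comp; [exact hf |]. destruct l; apply continuous_fst. Qed.

Lemma filterlim_Im {T} {F : (T -> Prop) -> Prop} {FF : Filter F} (f : T -> C) l :
  filterlim f F (locally l) -> filterlim (fun x => Im (f x)) F (locally (Im l)).
Proof. intros hf. eapply filterlim_comp; [exact hf |]. destruct l; apply continuous_snd. Qed.

Lemma is_derive_Re (f : R -> C) x l :
  is_derive f x l -> is_derive (fun t => Re (f t)) x (Re l).
Proof. intros hf. apply (filterdiff_comp f fst _ fst hf), filterdiff_linear, is_linear_fst. Qed.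

Lemma is_derive_Im (f : R -> C) x l :
  is_derive f x l -> is_derive (fun t => Im (f t)) x (Im l).
Proof. intros hf. apply (filterdiff_comp f snd _ snd hf), filterdiff_linear, is_linear_snd. Qed.

Lemma nondecreasing_of_derive_nonneg (g dg : R -> R) (a b : R) :
  a <= b -> (forall x, a <= x <= b -> is_derive g x (dg x)) ->
  (forall x, a <= x <= b -> 0 <= dg x) -> g a <= g b.
Proof.
  intros hab hd hpos.
  assert (hmvt := MVT_gen g a b dg). cbv zeta in hmvt.
  rewrite Rmin_left, Rmax_right in hmvt by exact hab.
  destruct hmvt as [x [hx heq]].
  - intros x hx. apply hd. lra.
  - intros x hx. apply continuity_pt_filterlim, (ex_derive_continuous g).
    eexists. apply hd, hx.
  - specialize (hpos x hx). nra.
Qed.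

Lemma filterlim_at_right_of_continuous {U : UniformSpace} (g : R -> U) x :
  continuous g x -> filterlim g (at_right x) (locally (g x)).
Proof. apply filterlim_filter_le_1, filter_le_within. Qed.

Lemma filterlim_at_left_of_continuous {U : UniformSpace} (g : R -> U) x :
  continuous g x -> filterlim g (at_left x) (locally (g x)).
Proof. apply filterlim_filter_le_1, filter_le_within. Qed.

Lemma ball_0_between (d : posreal) (x : R) : ball 0 d x -> - d < x < d.
Proof. intros h. change (Rabs (x - 0) < d) in h. apply Rabs_lt_between in h. lra. Qed.

Lemma RInt_derive_jump (H dH : R -> R) (Lm Lp b : R) :
  0 < b ->
  (forall z, z <> 0 -> is_derive H z (dH z)) ->
  (forall z, z <> 0 -> continuous dH z) ->
  ex_RInt dH (- b) b ->
  filterlim H (at_left 0) (locally Lm) ->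
  filterlim H (at_right 0) (locally Lp) ->
  RInt dH (- b) b = H b - H (- b) - (Lp - Lm).
Proof.
  intros hb hd hc hint hLm hLp.
  (* H x = H b - RInt dH 0 b + I x on (0, b), and I is continuous at 0; similarly on (-b, 0) *)
  set (I x := RInt dH 0 x).
  assert (hint0 : forall x, - b <= x <= b -> ex_RInt dH 0 x).
  { intros x hx. apply (ex_RInt_Chasles dH 0 (- b) x).
    - apply ex_RInt_swap, (ex_RInt_Chasles_1 dH (- b) 0 b); [lra | exact hint].
    - apply (ex_RInt_Chasles_1 dH (- b) x b); [lra | exact hint]. }
  assert (hI : continuous I 0).
  { apply (continuous_RInt_0 dH 0 I). exists (mkposreal b hb). intros x hx.
    apply (RInt_correct dH 0 x), hint0. apply ball_0_between in hx. simpl in hx. lra. }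
  assert (hI0 : I 0 = 0) by apply (RInt_point (V := R_CompleteNormedModule)).
  assert (ftc : forall x y, x <= y -> 0 < x \/ y < 0 -> RInt dH x y = H y - H x).
  { intros x y hxy hxy0. apply is_RInt_unique, (is_RInt_derive H dH).
    - intros t ht. rewrite Rmin_left, Rmax_right in ht by lra. apply hd. lra.
    - intros t ht. rewrite Rmin_left, Rmax_right in ht by lra. apply hc. lra. }
  assert (right : Lp = H b - RInt dH 0 b).
  { apply (filterlim_locally_unique H _ _ hLp).
    apply (filterlim_ext_loc (fun x => H b - RInt dH 0 b + I x)).
    - exists (mkposreal b hb). intros x hx hx0. apply ball_0_between in hx. simpl in hx.
      rewrite <- (RInt_Chasles dH 0 x b (hint0 x ltac:(lra))
        (ex_RInt_Chasles_2 dH (- b) x b ltac:(lra) hint)).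
      rewrite (ftc x b) by lra. unfold I, plus. simpl. ring.
    - apply (filterlim_locally_eq _ (H b - RInt dH 0 b + I 0)). 2: { rewrite hI0. ring. }
      apply filterlim_Rplus; [apply filterlim_const | apply filterlim_at_right_of_continuous, hI]. }
  assert (left : Lm = H (- b) + RInt dH (- b) 0).
  { apply (filterlim_locally_unique H _ _ hLm).
    apply (filterlim_ext_loc (fun x => H (- b) + RInt dH (- b) 0 + I x)).
    - exists (mkposreal b hb). intros x hx hx0. apply ball_0_between in hx. simpl in hx.
      rewrite <- (RInt_Chasles dH (- b) x 0 (ex_RInt_Chasles_1 dH (- b) x b ltac:(lra) hint)
        (ex_RInt_swap _ _ _ (hint0 x ltac:(lra)))).
      rewrite (ftc (- b) x) by lra. unfold I. rewrite <- opp_RInt_swap by (apply hint0; lra).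
      unfold plus, opp. simpl. ring.
    - apply (filterlim_locally_eq _ (H (- b) + RInt dH (- b) 0 + I 0)); [| rewrite hI0; ring].
      apply filterlim_Rplus; [apply filterlim_const | apply filterlim_at_left_of_continuous, hI]. }
  rewrite <- (RInt_Chasles dH (- b) 0 b (ex_RInt_swap _ _ _ (hint0 (- b) ltac:(lra)))
    (hint0 b ltac:(lra))).
  rewrite right, left. unfold plus. simpl. ring.
Qed.

Lemma is_RInt_gen_whole_line_ex_RInt (f : R -> R) (D : R) :
  is_RInt_gen f (Rbar_locally m_infty) (Rbar_locally p_infty) D ->
  forall a b, ex_RInt f a b.
Proof.
  intros hf a b.
  destruct (hf (fun _ => True) filter_true) as [Q P [M1 hQ] [M2 hP] hQP].
  set (s := Rabs M1 + Rabs M2 + Rabs a + Rabs b + 1).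
  pose proof (Rle_abs a). pose proof (Rle_abs (- a)).
  pose proof (Rle_abs b). pose proof (Rle_abs (- b)).
  pose proof (Rle_abs M2). pose proof (Rle_abs (- M1)). rewrite !Rabs_Ropp in *.
  pose proof (Rabs_pos M1). pose proof (Rabs_pos M2).
  destruct (hQP (- s) s) as [y [hy _]]; [apply hQ; unfold s; lra | apply hP; unfold s; lra |].
  apply (ex_RInt_Chasles f a (- s) b).
  - apply ex_RInt_swap, (ex_RInt_Chasles_1 f (- s) a s); [unfold s; lra | exists y; exact hy].
  - apply (ex_RInt_Chasles_1 f (- s) b s); [unfold s; lra | exists y; exact hy].
Qed.

Lemma is_RInt_gen_whole_line_lim (f : R -> R) (D : R) :
  is_RInt_gen f (Rbar_locally m_infty) (Rbar_locally p_infty) D ->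
  filterlim (fun s => RInt f (- s) s) (Rbar_locally p_infty) (locally D).
Proof.
  intros hf P hP. destruct (hf P hP) as [Q1 Q2 [M1 hQ1] [M2 hQ2] hQ].
  exists (Rabs M1 + Rabs M2). intros s hs.
  pose proof (Rle_abs M2). pose proof (Rle_abs (- M1)). rewrite Rabs_Ropp in *.
  pose proof (Rabs_pos M1). pose proof (Rabs_pos M2).
  destruct (hQ (- s) s) as [y [hy hPy]]; [apply hQ1; lra | apply hQ2; lra |].
  simpl in hy. rewrite (is_RInt_unique _ _ _ _ hy). exact hPy.
Qed.

Lemma RInt_symmetric_sub (f : R -> R) (a b : R) :
  (forall a b, ex_RInt f a b) ->
  RInt f (- b) b - RInt f (- a) a = RInt (fun t => f t + f (- t)) a b.
Proof.
  intros hex.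
  assert (hrefl : is_RInt (fun t => f (- t)) a b (RInt f (- b) (- a))).
  { rewrite <- opp_RInt_swap by apply hex.
    apply (is_RInt_ext (fun t => opp (opp (f (- t))))); [intros t _; apply opp_opp |].
    apply (is_RInt_opp (fun t => opp (f (- t)))), (is_RInt_comp_opp f), (RInt_correct f), hex. }
  rewrite (is_RInt_unique (fun t => f t + f (- t)) a b _
    (is_RInt_plus _ _ _ _ _ _ (RInt_correct f a b (hex a b)) hrefl)).
  rewrite <- (RInt_Chasles f (- b) (- a) b (hex _ _) (hex _ _)).
  rewrite <- (RInt_Chasles f (- a) a b (hex _ _) (hex _ _)).
  unfold plus. simpl. ring.
Qed.

Lemma exists_small_tail_radius (f : R -> R) (D : R) :
  (forall x, 0 <= f x) -> (forall a b, ex_RInt f a b) ->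
  filterlim (fun s => RInt f (- s) s) (Rbar_locally p_infty) (locally D) ->
  forall e R0, 0 < e -> exists R, R0 <= R /\ 1 <= R /\ R * (f R + f (- R)) < e.
Proof.
  intros hpos hex hlim e R0 he.
  destruct (hlim (fun y => Rabs (y - D) < e / 4)) as [S hS].
  { exists (mkposreal (e / 4) ltac:(lra)). intros y hy. exact hy. }
  set (R1 := Rmax (Rmax R0 (S + 1)) 1).
  assert (hR1 : R0 <= R1 /\ S < R1 /\ 1 <= R1).
  { unfold R1. pose proof (Rmax_l (Rmax R0 (S + 1)) 1). pose proof (Rmax_r (Rmax R0 (S + 1)) 1).
    pose proof (Rmax_l R0 (S + 1)). pose proof (Rmax_r R0 (S + 1)). lra. }
  apply NNPP. intros hno.
  assert (hall : forall R, R1 <= R -> e <= R * (f R + f (- R))).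
  { intros R hR. apply Rnot_lt_le. intros hlt. apply hno. exists R. lra. }
  (* otherwise f t + f (- t) >= e / (2 R1) on [R1, 2 R1], so the symmetric integrals would
     grow by e / 2 between R1 and 2 R1 although both are within e / 4 of D *)
  assert (hgrow : e / 2 <= RInt (fun t => f t + f (- t)) R1 (2 * R1)).
  { apply Rle_trans with (RInt (fun _ => e / (2 * R1)) R1 (2 * R1)).
    - rewrite RInt_const. unfold scal. simpl. unfold mult. simpl. apply Req_le. field. lra.
    - apply RInt_le; [lra | apply ex_RInt_const | apply (ex_RInt_plus (V := R_NormedModule)) |].
      + apply hex.
      + apply (ex_RInt_ext (fun t => opp (opp (f (- t))))); [intros; apply opp_opp |].
        apply (ex_RInt_opp (V := R_NormedModule)), (ex_RInt_comp_opp f), hex.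
      + intros t ht. specialize (hall t ltac:(lra)). pose proof (hpos t). pose proof (hpos (- t)).
        apply Rmult_le_reg_l with (2 * R1); [lra |]. field_simplify; nra. }
  rewrite <- RInt_symmetric_sub in hgrow by exact hex.
  pose proof (hS (2 * R1) ltac:(lra)) as h2. pose proof (hS R1 ltac:(lra)) as h1.
  apply Rabs_def2 in h1. apply Rabs_def2 in h2. lra.
Qed.

Definition tail_radii (f : R -> R) (Rn : nat -> R) : Prop :=
  is_lim_seq Rn p_infty /\ (forall n, 1 <= Rn n) /\
  is_lim_seq (fun n => Rn n * (f (Rn n) + f (- Rn n))) 0.

Lemma exists_tail_radii (f : R -> R) (D : R) :
  (forall x, 0 <= f x) ->
  is_RInt_gen f (Rbar_locally m_infty) (Rbar_locally p_infty) D ->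
  exists Rn, tail_radii f Rn.
Proof.
  intros hpos hf.
  destruct (functional_choice
    (fun n R => INR n <= R /\ 1 <= R /\ R * (f R + f (- R)) < / INR (S n))) as [Rn hRn].
  { intros n. apply (exists_small_tail_radius f D hpos).
    - apply (is_RInt_gen_whole_line_ex_RInt f D hf).
    - apply (is_RInt_gen_whole_line_lim f D hf).
    - apply Rinv_0_lt_compat, lt_0_INR. lia. }
  exists Rn. split; [| split].
  - apply (is_lim_seq_le_p_loc INR); [| apply is_lim_seq_INR].
    apply filter_forall. intros n. apply hRn.
  - intros n. apply hRn.
  - apply (is_lim_seq_le_le (fun _ => 0) _ (fun n => / INR (S n))).
    + intros n. destruct (hRn n) as [_ [h1 h2]].
      pose proof (hpos (Rn n)). pose proof (hpos (- Rn n)).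
      split; [apply Rmult_le_pos |]; lra.
    + apply is_lim_seq_const.
    + apply (is_lim_seq_incr_1 (fun n => / INR n)).
      apply (is_lim_seq_inv INR p_infty is_lim_seq_INR). discriminate.
Qed.

Lemma is_lim_seq_0_of_bound (a b c : nat -> R) (A B : R) :
  (forall n, 0 <= b n <= a n) -> is_lim_seq a 0 ->
  (forall n, Rabs (c n) <= A * a n + B * sqrt (b n)) -> is_lim_seq c 0.
Proof.
  intros hba ha hc.
  assert (hb : is_lim_seq b 0).
  { apply (is_lim_seq_le_le (fun _ => 0) _ a); [exact hba | apply is_lim_seq_const | exact ha]. }
  assert (hbound : is_lim_seq (fun n => A * a n + B * sqrt (b n)) 0).
  { replace (Finite 0) with (Finite (A * 0 + B * sqrt 0)) by (rewrite sqrt_0; f_equal; ring).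
    apply is_lim_seq_plus'; apply is_lim_seq_mult'; try apply is_lim_seq_const; [exact ha |].
    apply (is_lim_seq_continuous sqrt b 0); [apply continuity_pt_sqrt; lra | exact hb]. }
  apply is_lim_seq_abs_0.
  apply (is_lim_seq_le_le (fun _ => 0) _ _ _ (fun n => conj (Rabs_pos (c n)) (hc n))
    (is_lim_seq_const 0) hbound).
Qed.

Lemma tail_radii_lim (f w : R -> R) (Rn : nat -> R) (A B : R) :
  (forall x, 0 <= f x) -> tail_radii f Rn -> 0 <= A ->
  (forall z, 1 <= Rabs z -> Rabs (w z) <= A * (Rabs z * f z) + B * sqrt (f z)) ->
  is_lim_seq (fun n => w (Rn n)) 0 /\ is_lim_seq (fun n => w (- Rn n)) 0.
Proof.
  intros hpos [_ [hRn1 hRn]] hA hw.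
  assert (hbound : forall n, 0 <= f (Rn n) <= Rn n * (f (Rn n) + f (- Rn n))
                          /\ 0 <= f (- Rn n) <= Rn n * (f (Rn n) + f (- Rn n))).
  { intros n. specialize (hRn1 n). pose proof (hpos (Rn n)). pose proof (hpos (- Rn n)). nra. }
  assert (habs : forall n, Rabs (Rn n) = Rn n /\ Rabs (- Rn n) = Rn n).
  { intros n. rewrite Rabs_Ropp, Rabs_pos_eq; [auto | specialize (hRn1 n); lra]. }
  set (a n := Rn n * (f (Rn n) + f (- Rn n))).
  split.
  - apply (is_lim_seq_0_of_bound a (fun n => f (Rn n)) (fun n => w (Rn n)) A B);
      [apply hbound | exact hRn |].
    intros n. specialize (hw (Rn n)). rewrite (proj1 (habs n)) in hw.
    eapply Rle_trans; [apply hw, hRn1 |].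
    pose proof (hRn1 n). pose proof (hpos (- Rn n)).
    apply Rplus_le_compat_r, Rmult_le_compat_l; [exact hA | unfold a; nra].
  - apply (is_lim_seq_0_of_bound a (fun n => f (- Rn n)) (fun n => w (- Rn n)) A B);
      [apply hbound | exact hRn |].
    intros n. specialize (hw (- Rn n)). rewrite (proj2 (habs n)) in hw.
    eapply Rle_trans; [apply hw, hRn1 |].
    pose proof (hRn1 n). pose proof (hpos (Rn n)).
    apply Rplus_le_compat_r, Rmult_le_compat_l; [exact hA | unfold a; nra].
Qed.

Section HalfLine.

(* Components of a solution on (0, oo) whose mass flux G vanishes; c stands for h (1/2 - sigma). *)
Variables (kappa h c : R) (u v u1 v1 u2 v2 : R -> R) (tn : nat -> R).
Hypothesis h_pos : 0 < h.
Hypothesis c_nonneg : 0 <= c.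
Hypothesis u_derive : forall z, 0 < z -> is_derive u z (u1 z).
Hypothesis v_derive : forall z, 0 < z -> is_derive v z (v1 z).
Hypothesis u1_derive : forall z, 0 < z -> is_derive u1 z (u2 z).
Hypothesis v1_derive : forall z, 0 < z -> is_derive v1 z (v2 z).
Hypothesis u2_eq : forall z, 0 < z -> u2 z = kappa * u z + c * v z + h * z * v1 z.
Hypothesis v2_eq : forall z, 0 < z -> v2 z = kappa * v z - c * u z - h * z * u1 z.
Hypothesis mass_flux_eq_0 :
  forall z, 0 < z -> u z * v1 z - v z * u1 z + h / 2 * z * (u z ^ 2 + v z ^ 2) = 0.
Hypothesis tn_lim : is_lim_seq tn p_infty.
Hypothesis dens_tn_lim : is_lim_seq (fun n => u1 (tn n) ^ 2 + v1 (tn n) ^ 2) 0.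

Let mass z := u z ^ 2 + v z ^ 2.
Let dens z := u1 z ^ 2 + v1 z ^ 2.

Let lagrange z :
  (u z * u1 z + v z * v1 z) ^ 2 + (u z * v1 z - v z * u1 z) ^ 2 = mass z * dens z.
Proof. unfold mass, dens. ring. Qed.

Let halfline_dens_ge z : 0 < z -> (h * z / 2) ^ 2 * mass z <= dens z.
Proof.
  intros hz.
  assert (hcur : u z * v1 z - v z * u1 z = - (h * z / 2 * mass z)).
  { pose proof (mass_flux_eq_0 z hz). unfold mass. lra. }
  pose proof (lagrange z) as hl. rewrite hcur in hl.
  pose proof (pow2_ge_0 (u z * u1 z + v z * v1 z)).
  assert (0 <= mass z) by (unfold mass; nra).
  destruct (Req_dec (mass z) 0) as [h0 | h0]; [rewrite h0; unfold dens; nra |].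
  apply Rmult_le_reg_r with (mass z); nra.
Qed.

Let halfline_energy_nondecreasing a b :
  0 < a <= b -> dens a - kappa * mass a <= dens b - kappa * mass b.
Proof.
  intros hab.
  apply (nondecreasing_of_derive_nonneg (fun z => dens z - kappa * mass z)
    (fun z => c * h * z * mass z)); [lra | |].
  - intros z hz.
    assert (hz0 : 0 < z) by lra.
    pose proof (u_derive z hz0). pose proof (v_derive z hz0).
    pose proof (u1_derive z hz0). pose proof (v1_derive z hz0).
    unfold dens, mass. derive_by_hyps.
    rewrite (u2_eq z hz0), (v2_eq z hz0).
    pose proof (mass_flux_eq_0 z hz0). nra.
  - intros z hz. unfold mass.
    apply Rmult_le_pos; [apply Rmult_le_pos; [apply Rmult_le_pos |] |]; nra.
Qed.

Let halfline_dens_le z : 0 < z -> dens z <= kappa * mass z.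
Proof.
  intros hz. apply Rnot_lt_le. intros hlt.
  set (E0 := dens z - kappa * mass z).
  set (Y := z + 2 * (Rabs kappa + 1) / h).
  assert (hY : forall y, Y <= y -> E0 / 2 <= dens y).
  { intros y hy.
    assert (hzy : z <= y).
    { unfold Y in hy. assert (0 < 2 * (Rabs kappa + 1) / h).
      { apply Rdiv_lt_0_compat; [pose proof (Rabs_pos kappa) |]; lra. }
      lra. }
    pose proof (halfline_energy_nondecreasing z y (conj hz hzy)) as hE.
    assert (hhy : Rabs kappa + 1 <= h * y / 2).
    { unfold Y in hy. apply Rmult_le_compat_l with (r := h) in hy; [| lra].
      replace (h * (z + 2 * (Rabs kappa + 1) / h)) with (h * z + 2 * (Rabs kappa + 1)) in hy
        by (field; lra).
      nra. }
    pose proof (halfline_dens_ge y ltac:(lra)).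
    pose proof (Rabs_pos kappa). pose proof (Rle_abs (- kappa)). rewrite Rabs_Ropp in *.
    assert (0 <= mass y) by (unfold mass; nra).
    assert (Rabs kappa <= (h * y / 2) ^ 2) by nra.
    assert (Rabs kappa * mass y <= dens y) by nra.
    assert (- kappa * mass y <= Rabs kappa * mass y) by (apply Rmult_le_compat_r; lra).
    unfold E0. lra. }
  assert (hev : eventually (fun n => Y < tn n)).
  { apply tn_lim. exists Y. auto. }
  pose proof (is_lim_seq_le_loc (fun _ => E0 / 2) _ _ _
    (filter_imp _ _ (fun n hn => hY (tn n) (Rlt_le _ _ hn)) hev)
    (is_lim_seq_const _) dens_tn_lim) as hle.
  simpl in hle. unfold E0 in hle. lra.
Qed.

Let halfline_mass_eq_0_far z : 0 < z -> kappa < (h * z / 2) ^ 2 -> mass z = 0.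
Proof.
  intros hz hk.
  pose proof (halfline_dens_ge z hz). pose proof (halfline_dens_le z hz).
  assert (0 <= mass z) by (unfold mass; nra).
  assert (((h * z / 2) ^ 2 - kappa) * mass z <= 0) by nra.
  apply Rle_antisym; [| assumption].
  apply Rmult_le_reg_l with ((h * z / 2) ^ 2 - kappa); lra.
Qed.

(* Gronwall: |mass'| <= 2 sqrt kappa mass, by Cauchy-Schwarz and halfline_dens_le. *)
Let halfline_mass_exp_nondecreasing a b : 0 <= kappa -> 0 < a <= b ->
  mass a * exp (2 * sqrt kappa * a) <= mass b * exp (2 * sqrt kappa * b).
Proof.
  intros hk hab. set (s := sqrt kappa).
  assert (hs : 0 <= s /\ s * s = kappa) by (split; [apply sqrt_pos | apply sqrt_sqrt, hk]).
  apply (nondecreasing_of_derive_nonneg (fun t => mass t * exp (2 * s * t))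
    (fun t => 2 * ((u t * u1 t + v t * v1 t) + s * mass t) * exp (2 * s * t))); [lra | |].
  - intros t ht. assert (ht0 : 0 < t) by lra.
    pose proof (u_derive t ht0). pose proof (v_derive t ht0).
    unfold mass. derive_by_hyps. ring.
  - intros t ht. assert (ht0 : 0 < t) by lra.
    pose proof (lagrange t). pose proof (halfline_dens_le t ht0).
    pose proof (pow2_ge_0 (u t * v1 t - v t * u1 t)).
    assert (0 <= mass t) by (unfold mass; nra). assert (0 <= dens t) by (unfold dens; nra).
    assert (0 <= s * mass t) by (apply Rmult_le_pos; [apply hs | assumption]).
    assert (0 <= u t * u1 t + v t * v1 t + s * mass t).
    { apply Rnot_lt_le. intros hneg.
      assert (mass t * dens t <= s * s * mass t * mass t) by (destruct hs; nra).
      nra. }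
    apply Rmult_le_pos; [lra | apply Rlt_le, exp_pos].
Qed.

Lemma halfline_mass_eq_0 z : 0 < z -> u z ^ 2 + v z ^ 2 = 0.
Proof.
  intros hz. change (mass z = 0).
  assert (hmass : 0 <= mass z) by (unfold mass; nra).
  destruct (Rle_lt_or_eq_dec 0 (mass z) hmass) as [hpos | h0]; [exfalso | auto].
  assert (hk : 0 <= kappa).
  { pose proof (halfline_dens_le z hz). assert (0 <= dens z) by (unfold dens; nra). nra. }
  set (s := sqrt kappa).
  assert (hs : 0 <= s /\ s * s = kappa) by (split; [apply sqrt_pos | apply sqrt_sqrt, hk]).
  set (W := z + 2 * (s + 1) / h).
  assert (hW : s + 1 <= h * W / 2).
  { unfold W. replace (h * (z + 2 * (s + 1) / h) / 2) with (h * z / 2 + (s + 1)) by (field; lra).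
    nra. }
  assert (hzW : z <= W).
  { unfold W. assert (0 < 2 * (s + 1) / h) by (apply Rdiv_lt_0_compat; lra). lra. }
  pose proof (halfline_mass_exp_nondecreasing z W hk (conj hz hzW)) as hmono.
  assert (hfar : kappa < (h * W / 2) ^ 2).
  { destruct hs as [hs0 hss]. rewrite <- hss. nra. }
  rewrite (halfline_mass_eq_0_far W ltac:(lra) hfar) in hmono.
  pose proof (exp_pos (2 * sqrt kappa * z)). nra.
Qed.

End HalfLine.

Definition profile_equation (kappa h sigma : R) (e e' e'' : C) (z : R) : Prop :=
  ((RtoC kappa + Ci * RtoC (h * sigma)) * e
   - Ci * RtoC h * (RtoC (/ 2) * e + RtoC z * e') - e'')%C = RtoC 0.

Lemma profile_equation_Re kappa h sigma e e' e'' z :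
  profile_equation kappa h sigma e e' e'' z ->
  Re e'' = kappa * Re e + h * (/ 2 - sigma) * Im e + h * z * Im e'.
Proof. intros heq. apply (f_equal Re) in heq. simpl in heq. unfold Re, Im. lra. Qed.

Lemma profile_equation_Im kappa h sigma e e' e'' z :
  profile_equation kappa h sigma e e' e'' z ->
  Im e'' = kappa * Im e - h * (/ 2 - sigma) * Re e - h * z * Re e'.
Proof. intros heq. apply (f_equal Im) in heq. simpl in heq. unfold Re, Im. lra. Qed.

Lemma Cmod_sqr (x : C) : Cmod x ^ 2 = Re x ^ 2 + Im x ^ 2.
Proof. unfold Cmod. rewrite pow2_sqrt; [reflexivity | nra]. Qed.

Lemma Rabs_dot_le_sqrt (a b c d : R) :
  Rabs (a * c + b * d) <= sqrt (a ^ 2 + b ^ 2) * sqrt (c ^ 2 + d ^ 2).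
Proof.
  rewrite <- sqrt_mult by nra. rewrite <- sqrt_Rsqr_abs. apply sqrt_le_1_alt.
  unfold Rsqr. pose proof (pow2_ge_0 (a * d - b * c)). nra.
Qed.

Lemma rpow_mul_sqr (x a : R) : 0 <= x -> rpow x a * x ^ 2 = rpow x (a + 2).
Proof.
  intros hx. unfold rpow. destruct (Rle_dec x 0); [ring |].
  rewrite Rpower_plus, <- (Rpower_pow 2 x) by lra. simpl (INR 2). reflexivity.
Qed.

Section Solution.

Variables (kappa h sigma r M D : R) (eta eta' eta'' : R -> C) (dplus dminus : C).
Hypothesis h_pos : 0 < h.
Hypothesis eta_derive : forall z, z <> 0 -> is_derive eta z (eta' z).
Hypothesis eta'_derive : forall z, z <> 0 -> is_derive eta' z (eta'' z).
Hypothesis eta_equation :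
  forall z, z <> 0 -> profile_equation kappa h sigma (eta z) (eta' z) (eta'' z) z.
Hypothesis eta_continuous_0 : continuous eta 0.
Hypothesis eta'_lim_right : filterlim eta' (at_right 0) (locally dplus).
Hypothesis eta'_lim_left : filterlim eta' (at_left 0) (locally dminus).
Hypothesis eta'_jump : (dplus - dminus)%C = (- (RtoC r * eta 0))%C.
Hypothesis eta_bounded : forall z, Cmod (eta z) <= M.
Hypothesis dirichlet_finite :
  is_RInt_gen (fun z => Cmod (eta' z) ^ 2) (Rbar_locally m_infty) (Rbar_locally p_infty) D.

Let u z := Re (eta z).
Let v z := Im (eta z).
Let u1 z := Re (eta' z).
Let v1 z := Im (eta' z).
Let u2 z := Re (eta'' z).
Let v2 z := Im (eta'' z).
Let mass z := u z ^ 2 + v z ^ 2.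
Let dens z := u1 z ^ 2 + v1 z ^ 2.
Let current z := u z * v1 z - v z * u1 z.
Let mass_flux z := current z + h / 2 * z * mass z.
Let pohozaev_flux z :=
  / 2 * z * dens z + (/ 2 - sigma) * (u z * u1 z + v z * v1 z) + kappa / h * current z.

Let u_derive z : z <> 0 -> is_derive u z (u1 z).
Proof. intros hz. apply is_derive_Re, eta_derive, hz. Qed.
Let v_derive z : z <> 0 -> is_derive v z (v1 z).
Proof. intros hz. apply is_derive_Im, eta_derive, hz. Qed.
Let u1_derive z : z <> 0 -> is_derive u1 z (u2 z).
Proof. intros hz. apply is_derive_Re, eta'_derive, hz. Qed.
Let v1_derive z : z <> 0 -> is_derive v1 z (v2 z).
Proof. intros hz. apply is_derive_Im, eta'_derive, hz. Qed.
Let u2_eq z : z <> 0 -> u2 z = kappa * u z + h * (/ 2 - sigma) * v z + h * z * v1 z.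
Proof. intros hz. apply profile_equation_Re, eta_equation, hz. Qed.
Let v2_eq z : z <> 0 -> v2 z = kappa * v z - h * (/ 2 - sigma) * u z - h * z * u1 z.
Proof. intros hz. apply profile_equation_Im, eta_equation, hz. Qed.

Let pohozaev_flux_derive z : z <> 0 -> is_derive pohozaev_flux z ((1 - sigma) * dens z).
Proof.
  intros hz.
  pose proof (u_derive z hz). pose proof (v_derive z hz).
  pose proof (u1_derive z hz). pose proof (v1_derive z hz).
  unfold pohozaev_flux, dens, current. derive_by_hyps.
  rewrite (u2_eq z hz), (v2_eq z hz). field. lra.
Qed.

Let mass_flux_derive z : z <> 0 -> is_derive mass_flux z (h * sigma * mass z).
Proof.
  intros hz.
  pose proof (u_derive z hz). pose proof (v_derive z hz).
  pose proof (u1_derive z hz). pose proof (v1_derive z hz).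
  unfold mass_flux, mass, current. derive_by_hyps.
  rewrite (u2_eq z hz), (v2_eq z hz). field.
Qed.

Let u_lim_right : filterlim u (at_right 0) (locally (u 0)).
Proof. apply filterlim_Re, filterlim_at_right_of_continuous, eta_continuous_0. Qed.
Let v_lim_right : filterlim v (at_right 0) (locally (v 0)).
Proof. apply filterlim_Im, filterlim_at_right_of_continuous, eta_continuous_0. Qed.
Let u_lim_left : filterlim u (at_left 0) (locally (u 0)).
Proof. apply filterlim_Re, filterlim_at_left_of_continuous, eta_continuous_0. Qed.
Let v_lim_left : filterlim v (at_left 0) (locally (v 0)).
Proof. apply filterlim_Im, filterlim_at_left_of_continuous, eta_continuous_0. Qed.
Let u1_lim_right : filterlim u1 (at_right 0) (locally (Re dplus)).
Proof. apply filterlim_Re, eta'_lim_right. Qed.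
Let v1_lim_right : filterlim v1 (at_right 0) (locally (Im dplus)).
Proof. apply filterlim_Im, eta'_lim_right. Qed.
Let u1_lim_left : filterlim u1 (at_left 0) (locally (Re dminus)).
Proof. apply filterlim_Re, eta'_lim_left. Qed.
Let v1_lim_left : filterlim v1 (at_left 0) (locally (Im dminus)).
Proof. apply filterlim_Im, eta'_lim_left. Qed.
Let id_lim_right : filterlim (fun z => z) (at_right 0) (locally 0).
Proof. apply (filterlim_at_right_of_continuous (fun z => z)), continuous_id. Qed.
Let id_lim_left : filterlim (fun z => z) (at_left 0) (locally 0).
Proof. apply (filterlim_at_left_of_continuous (fun z => z)), continuous_id. Qed.

Let jump_Re : Re dplus - Re dminus = - r * u 0.
Proof. apply (f_equal Re) in eta'_jump. simpl in eta'_jump. unfold u, Re. lra. Qed.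
Let jump_Im : Im dplus - Im dminus = - r * v 0.
Proof. apply (f_equal Im) in eta'_jump. simpl in eta'_jump. unfold v, Im. lra. Qed.

Let pohozaev_flux_0 (d : C) :=
  (/ 2 - sigma) * (u 0 * Re d + v 0 * Im d) + kappa / h * (u 0 * Im d - v 0 * Re d).
Let current_0 (d : C) := u 0 * Im d - v 0 * Re d.

Let pohozaev_flux_lim_right :
  filterlim pohozaev_flux (at_right 0) (locally (pohozaev_flux_0 dplus)).
Proof.
  eapply filterlim_locally_eq; [unfold pohozaev_flux, dens, current; lim_by_hyps |].
  unfold pohozaev_flux_0, Rdiv. ring.
Qed.

Let pohozaev_flux_lim_left :
  filterlim pohozaev_flux (at_left 0) (locally (pohozaev_flux_0 dminus)).
Proof.
  eapply filterlim_locally_eq; [unfold pohozaev_flux, dens, current; lim_by_hyps |].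
  unfold pohozaev_flux_0, Rdiv. ring.
Qed.

Let mass_flux_lim_right : filterlim mass_flux (at_right 0) (locally (current_0 dplus)).
Proof.
  eapply filterlim_locally_eq; [unfold mass_flux, mass, current; lim_by_hyps |].
  unfold current_0. ring.
Qed.

Let mass_flux_lim_left : filterlim mass_flux (at_left 0) (locally (current_0 dplus)).
Proof.
  eapply filterlim_locally_eq; [unfold mass_flux, mass, current; lim_by_hyps |].
  unfold current_0.
  replace (Re dplus) with (Re dminus - r * u 0) by lra.
  replace (Im dplus) with (Im dminus - r * v 0) by lra. ring.
Qed.

Let dens_nonneg z : 0 <= dens z.
Proof. unfold dens. nra. Qed.

Let dens_integrable : is_RInt_gen dens (Rbar_locally m_infty) (Rbar_locally p_infty) D.
Proof.
  apply (is_RInt_gen_ext (fun z => Cmod (eta' z) ^ 2)); [| exact dirichlet_finite].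
  apply filter_forall. intros ab z _. apply Cmod_sqr.
Qed.

Let pohozaev_partial R : 0 < R ->
  (1 - sigma) * RInt dens (- R) R
  = pohozaev_flux R - pohozaev_flux (- R) + (/ 2 - sigma) * r * mass 0.
Proof.
  intros hR.
  assert (hex := is_RInt_gen_whole_line_ex_RInt dens D dens_integrable).
  assert (hscal : RInt (fun z => (1 - sigma) * dens z) (- R) R = (1 - sigma) * RInt dens (- R) R)
    by exact (RInt_scal (V := R_CompleteNormedModule) dens (- R) R (1 - sigma) (hex _ _)).
  assert (hcont : forall z, z <> 0 -> continuous (fun z => (1 - sigma) * dens z) z).
  { intros z hz. apply (ex_derive_continuous (fun z => (1 - sigma) * dens z)).
    pose proof (u1_derive z hz). pose proof (v1_derive z hz).
    unfold dens. auto_derive. repeat split; eexists; eassumption. }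
  assert (hexs : ex_RInt (fun z => (1 - sigma) * dens z) (- R) R)
    by apply (ex_RInt_scal (V := R_NormedModule)), hex.
  rewrite <- hscal, (RInt_derive_jump _ _ _ _ R hR pohozaev_flux_derive hcont hexs
    pohozaev_flux_lim_left pohozaev_flux_lim_right).
  unfold pohozaev_flux_0, mass.
  replace (Re dplus) with (Re dminus - r * u 0) by lra.
  replace (Im dplus) with (Im dminus - r * v 0) by lra.
  field. lra.
Qed.

Let sqrt_mass_le z : sqrt (mass z) <= M.
Proof. apply eta_bounded. Qed.

Let Rabs_dot_le z : Rabs (u z * u1 z + v z * v1 z) <= M * sqrt (dens z).
Proof.
  eapply Rle_trans; [apply Rabs_dot_le_sqrt |].
  apply Rmult_le_compat_r; [apply sqrt_pos | apply sqrt_mass_le].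
Qed.

Let current_bound z : Rabs (current z) <= M * sqrt (dens z).
Proof.
  unfold current. replace (u z * v1 z - v z * u1 z) with (u z * v1 z + v z * (- u1 z)) by ring.
  eapply Rle_trans; [apply Rabs_dot_le_sqrt |].
  replace ((- u1 z) ^ 2) with (u1 z ^ 2) by ring. rewrite (Rplus_comm (v1 z ^ 2)).
  apply Rmult_le_compat_r; [apply sqrt_pos | apply sqrt_mass_le].
Qed.

Let pohozaev_flux_bound z :
  Rabs (pohozaev_flux z)
  <= / 2 * (Rabs z * dens z) + (Rabs (/ 2 - sigma) + Rabs (kappa / h)) * M * sqrt (dens z).
Proof.
  unfold pohozaev_flux.
  pose proof (current_bound z) as hc. pose proof (Rabs_dot_le z) as hd.
  apply Rmult_le_compat_l with (r := Rabs (kappa / h)) in hc; [| apply Rabs_pos].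
  apply Rmult_le_compat_l with (r := Rabs (/ 2 - sigma)) in hd; [| apply Rabs_pos].
  eapply Rle_trans; [apply Rabs_triang |].
  eapply Rle_trans; [apply Rplus_le_compat_r, Rabs_triang |].
  rewrite !Rabs_mult, (Rabs_pos_eq (/ 2)), (Rabs_pos_eq (dens z)) by (auto; lra).
  lra.
Qed.

Let radii : exists Rn, tail_radii dens Rn.
Proof. exact (exists_tail_radii dens D dens_nonneg dens_integrable). Qed.

Let current_tail_lim Rn : tail_radii dens Rn ->
  is_lim_seq (fun n => current (Rn n)) 0 /\ is_lim_seq (fun n => current (- Rn n)) 0.
Proof.
  intros hRn. apply (tail_radii_lim dens current Rn 0 M dens_nonneg hRn (Rle_refl 0)).
  intros z _. rewrite Rmult_0_l, Rplus_0_l. apply current_bound.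
Qed.

Let dens_tail_lim Rn : tail_radii dens Rn ->
  is_lim_seq (fun n => dens (Rn n)) 0 /\ is_lim_seq (fun n => dens (- Rn n)) 0.
Proof.
  intros hRn. apply (tail_radii_lim dens dens Rn 1 0 dens_nonneg hRn ltac:(lra)).
  intros z hz. rewrite Rabs_pos_eq by apply dens_nonneg. pose proof (dens_nonneg z). nra.
Qed.

Theorem pohozaev_identity : (1 - sigma) * D = (/ 2 - sigma) * r * Cmod (eta 0) ^ 2.
Proof.
  destruct radii as [Rn hRn].
  destruct (tail_radii_lim dens pohozaev_flux Rn (/ 2) _ dens_nonneg hRn ltac:(lra)
    (fun z _ => pohozaev_flux_bound z)) as [hright hleft].
  assert (hRint : is_lim_seq (fun n => (1 - sigma) * RInt dens (- Rn n) (Rn n)) ((1 - sigma) * D)).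
  { apply is_lim_seq_mult'; [apply is_lim_seq_const |].
    apply (filterlim_comp _ _ _ Rn (fun s => RInt dens (- s) s) _ _ _ (proj1 hRn)).
    apply is_RInt_gen_whole_line_lim, dens_integrable. }
  assert (hflux : is_lim_seq (fun n => (1 - sigma) * RInt dens (- Rn n) (Rn n))
                    (0 - 0 + (/ 2 - sigma) * r * mass 0)).
  { apply (is_lim_seq_ext
      (fun n => pohozaev_flux (Rn n) - pohozaev_flux (- Rn n) + (/ 2 - sigma) * r * mass 0)).
    - intros n. destruct hRn as [_ [hRn1 _]]. rewrite pohozaev_partial; [reflexivity |].
      specialize (hRn1 n). lra.
    - apply is_lim_seq_plus'; [apply is_lim_seq_minus'; assumption | apply is_lim_seq_const]. }
  apply is_lim_seq_unique in hRint. apply is_lim_seq_unique in hflux.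
  rewrite hRint in hflux. injection hflux as hD. rewrite Cmod_sqr. unfold mass, u, v in hD. lra.
Qed.

Let mass_nonneg z : 0 <= mass z.
Proof. unfold mass. nra. Qed.

Let mass_flux_nonincreasing : sigma <= 0 ->
  forall a b, a <= b -> 0 < a \/ b < 0 -> mass_flux b <= mass_flux a.
Proof.
  intros hs a b hab hab0.
  cut (- mass_flux a <= - mass_flux b); [lra |].
  apply (nondecreasing_of_derive_nonneg (fun z => - mass_flux z) (fun z => - (h * sigma * mass z)));
    [exact hab | |].
  - intros x hx. pose proof (mass_flux_derive x ltac:(lra)). derive_by_hyps. ring.
  - intros x hx. pose proof (mass_nonneg x).
    assert (0 <= h * - sigma * mass x) by (apply Rmult_le_pos; [apply Rmult_le_pos |]; lra). lra.
Qed.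

Let mass_flux_bounds_right : sigma <= 0 ->
  forall z, 0 < z -> 0 <= mass_flux z <= current_0 dplus.
Proof.
  intros hs z hz. split.
  - destruct radii as [Rn hRn]. destruct (current_tail_lim Rn hRn) as [hcur _].
    assert (hev : eventually (fun n => current (Rn n) <= mass_flux z)).
    { apply (filter_imp (fun n => z < Rn n)); [| apply (proj1 hRn); exists z; auto].
      intros n hn. apply Rle_trans with (mass_flux (Rn n)); [| apply mass_flux_nonincreasing; lra].
      unfold mass_flux. pose proof (mass_nonneg (Rn n)).
      assert (0 <= h / 2 * Rn n * mass (Rn n)) by (apply Rmult_le_pos; [apply Rmult_le_pos |]; lra).
      lra. }
    exact (is_lim_seq_le_loc _ _ _ _ hev hcur (is_lim_seq_const _)).
  - apply (closed_filterlim_loc mass_flux (fun y => mass_flux z <= y) _ mass_flux_lim_right);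
      [| apply closed_ge].
    exists (mkposreal z hz). intros x hx hx0. apply ball_0_between in hx. simpl in hx.
    apply mass_flux_nonincreasing; lra.
Qed.

Let mass_flux_bounds_left : sigma <= 0 ->
  forall z, z < 0 -> current_0 dplus <= mass_flux z <= 0.
Proof.
  intros hs z hz. split.
  - apply (closed_filterlim_loc mass_flux (fun y => y <= mass_flux z) _ mass_flux_lim_left);
      [| apply closed_le].
    exists (mkposreal (- z) ltac:(lra)). intros x hx hx0. apply ball_0_between in hx. simpl in hx.
    apply mass_flux_nonincreasing; lra.
  - destruct radii as [Rn hRn]. destruct (current_tail_lim Rn hRn) as [_ hcur].
    assert (hev : eventually (fun n => mass_flux z <= current (- Rn n))).
    { apply (filter_imp (fun n => - z < Rn n)); [| apply (proj1 hRn); exists (- z); auto].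
      intros n hn. apply Rle_trans with (mass_flux (- Rn n));
        [apply mass_flux_nonincreasing; lra |].
      unfold mass_flux. pose proof (mass_nonneg (- Rn n)).
      assert (0 <= h / 2 * Rn n * mass (- Rn n))
        by (apply Rmult_le_pos; [apply Rmult_le_pos |]; lra).
      lra. }
    exact (is_lim_seq_le_loc _ _ _ _ hev (is_lim_seq_const _) hcur).
Qed.

Let mass_flux_eq_0 : sigma <= 0 -> forall z, z <> 0 -> mass_flux z = 0.
Proof.
  intros hs z hz.
  pose proof (mass_flux_bounds_right hs 1 Rlt_0_1).
  pose proof (mass_flux_bounds_left hs (-1) ltac:(lra)).
  destruct (Rtotal_order z 0) as [hneg | [h0 | hpos]]; [| contradiction |].
  - pose proof (mass_flux_bounds_left hs z hneg). lra.
  - pose proof (mass_flux_bounds_right hs z hpos). lra.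
Qed.

Let mass_eq_0_right : sigma <= 0 -> forall z, 0 < z -> mass z = 0.
Proof.
  intros hs. destruct radii as [Rn hRn]. destruct (dens_tail_lim Rn hRn) as [hdens _].
  apply (halfline_mass_eq_0 kappa h (h * (/ 2 - sigma)) u v u1 v1 u2 v2 Rn h_pos); [nra | ..].
  - intros t ht. apply u_derive. lra.
  - intros t ht. apply v_derive. lra.
  - intros t ht. apply u1_derive. lra.
  - intros t ht. apply v1_derive. lra.
  - intros t ht. apply u2_eq. lra.
  - intros t ht. apply v2_eq. lra.
  - intros t ht. apply (mass_flux_eq_0 hs). lra.
  - apply hRn.
  - exact hdens.
Qed.

(* The equation is invariant under z |-> - z, which maps eta' to - eta' (- z). *)
Let mass_eq_0_left : sigma <= 0 -> forall z, 0 < z -> mass (- z) = 0.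
Proof.
  intros hs. destruct radii as [Rn hRn]. destruct (dens_tail_lim Rn hRn) as [_ hdens].
  apply (halfline_mass_eq_0 kappa h (h * (/ 2 - sigma)) (fun t => u (- t)) (fun t => v (- t))
    (fun t => - u1 (- t)) (fun t => - v1 (- t)) (fun t => u2 (- t)) (fun t => v2 (- t)) Rn h_pos);
    [nra | ..].
  - intros t ht. pose proof (u_derive (- t) ltac:(lra)). derive_by_hyps. ring.
  - intros t ht. pose proof (v_derive (- t) ltac:(lra)). derive_by_hyps. ring.
  - intros t ht. pose proof (u1_derive (- t) ltac:(lra)). derive_by_hyps. ring.
  - intros t ht. pose proof (v1_derive (- t) ltac:(lra)). derive_by_hyps. ring.
  - intros t ht. rewrite (u2_eq (- t)) by lra. ring.
  - intros t ht. rewrite (v2_eq (- t)) by lra. ring.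
  - intros t ht. pose proof (mass_flux_eq_0 hs (- t) ltac:(lra)) as hG.
    unfold mass_flux, current, mass in hG. lra.
  - apply hRn.
  - apply (is_lim_seq_ext (fun n => dens (- Rn n))); [intros n; unfold dens; ring | exact hdens].
Qed.

Let mass_eq_0 : sigma <= 0 -> forall z, mass z = 0.
Proof.
  intros hs z. destruct (Rtotal_order z 0) as [hneg | [-> | hpos]].
  - rewrite <- (Ropp_involutive z). apply (mass_eq_0_left hs). lra.
  - apply Rle_antisym; [| apply mass_nonneg].
    assert (hlim : filterlim mass (at_right 0) (locally (mass 0))) by (unfold mass; lim_by_hyps).
    apply (closed_filterlim_loc mass (fun y => y <= 0) (mass 0) hlim); [| apply closed_le].
    exists (mkposreal 1 Rlt_0_1). intros x _ hx. rewrite (mass_eq_0_right hs x hx). lra.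
  - apply (mass_eq_0_right hs z hpos).
Qed.

Theorem sigma_pos : (exists z, eta z <> RtoC 0) -> 0 < sigma.
Proof.
  intros [z hz]. apply Rnot_le_lt. intros hs. apply hz.
  pose proof (mass_eq_0 hs z) as hm. unfold mass, u, v, Re, Im in hm.
  apply injective_projections; simpl; nra.
Qed.

End Solution.

Theorem theorem1p2 (p kappa h sigma : R) (eta eta' eta'' : R -> C) (dplus dminus : C) :
  1 < p -> 0 < h -> sigma < 1 ->
  (* eta' and eta'' are the first and second derivatives of eta away from 0 *)
  (forall z, z <> 0 -> is_derive eta z (eta' z)) ->
  (forall z, z <> 0 -> is_derive eta' z (eta'' z)) ->
  (* the equation for z <> 0 *)
  (forall z, z <> 0 ->
     ((RtoC kappa + Ci * RtoC (h * sigma)) * eta z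
      - Ci * RtoC h * (RtoC (/ 2) * eta z + RtoC z * eta' z)
      - eta'' z)%C = RtoC 0) ->
  (* continuity at 0 *)
  continuous eta 0 ->
  (* one-sided limits of eta_z at 0 and the jump condition *)
  filterlim eta' (at_right 0) (locally dplus) ->
  filterlim eta' (at_left 0) (locally dminus) ->
  (dplus - dminus)%C = (- (RtoC (rpow (Cmod (eta 0)) (p - 1)) * eta 0))%C ->
  (* finite energy: eta in L^infty and eta_z in L^2 *)
  (exists M, forall z, Cmod (eta z) <= M) ->
  ex_RInt_gen (fun z => (Cmod (eta' z)) ^ 2) (Rbar_locally m_infty) (Rbar_locally p_infty) ->
  (* nontrivial *)
  (exists z, eta z <> RtoC 0) ->
  0 < sigma /\
  0 = (1 - sigma) * dirichlet eta' - (/ 2 - sigma) * rpow (Cmod (eta 0)) (p + 1) /\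
  (sigma = / 2 - / (p - 1) -> energy p eta eta' = 0).
Proof.
  intros hp hh hs deta deta' heq hcont hright hleft hjump [M hM] [D hD] hnontriv.
  assert (hdir : dirichlet eta' = D) by (apply is_RInt_gen_unique, hD).
  assert (hrpow : rpow (Cmod (eta 0)) (p - 1) * Cmod (eta 0) ^ 2 = rpow (Cmod (eta 0)) (p + 1)).
  { rewrite rpow_mul_sqr by apply Cmod_ge_0. f_equal. ring. }
  pose proof (pohozaev_identity kappa h sigma _ M D eta eta' eta'' dplus dminus
    hh deta deta' heq hcont hright hleft hjump hM hD) as hpoho.
  rewrite Rmult_assoc, hrpow in hpoho.
  unfold energy. rewrite hdir.
  split; [| split].
  - exact (sigma_pos kappa h sigma _ M D eta eta' eta'' dplus dminus
      hh deta deta' heq hcont hright hleft hjump hM hD hnontriv).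
  - lra.
  - intros ->.
    replace (/ 2 * D - / (p + 1) * rpow (Cmod (eta 0)) (p + 1))
      with (2 * (p - 1) / (2 * (p + 1)) * ((1 - (/ 2 - / (p - 1))) * D
            - (/ 2 - (/ 2 - / (p - 1))) * rpow (Cmod (eta 0)) (p + 1))) by (field; lra).
    rewrite hpoho. ring.
Qed.
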